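(* In the planted $k$-factor model with $p=\lambda/n$, assume $k\lambda\ge 1+\epsilon$ for some constant $\epsilon>0$. Then for every $\delta>0$ and every realization of $H^*$, $$\mathbb P\Big(|\mathcal H_{\rm good}(G)|\le \tfrac{k\lambda}{k\lambda-1}(k\lambda)^{\delta n}\ \Big|\ H^*\Big)\ge 1-(k\lambda)^{-\delta n/2}.$$
   Context: Planted $k$-factor model: fix an integer $k\ge1$ and $n$ with $kn$ even. A $k$-factor on $[n]$ is a $k$-regular simple graph with vertex set $[n]$, identified with its edge set; $\mathcal H$ is the set of all $k$-factors on $[n]$. Let $p=\lambda/n\in[0,1]$. Draw $H^*$ uniformly at random from $\mathcal H$ and, independently, $G_0\sim\mathcal G(n,p)$. The observed graph is $G=G_0\cup H^*$. For $H\in\mathcal H$, $\ell(H,H^* )=|H\triangle H^*|/(kn/2)$. For $\delta>0$, $\mathcal H_{\rm good}(G)=\{H\in\mathcal H:\ \ell(H,H^* )<2\delta/k,\ H\subseteq E(G)\}$. *)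

From HB Require Import structures.
From mathcomp Require Import all_boot all_order all_algebra.
From mathcomp Require Import boolp classical_sets reals exp.
Set Implicit Arguments. Unset Strict Implicit. Unset Printing Implicit Defensive.
Import Order.TTheory GRing.Theory Num.Theory.
Local Open Scope ring_scope.

(* Vertex set [n] is 'I_n; an edge is a 2-element subset of 'I_n;
   a (simple) graph is identified with its edge set, a {set {set 'I_n}}. *)
Definition pairs (n : nat) : {set {set 'I_n}} := [set e : {set 'I_n} | #|e| == 2%N].

Definition is_kfactor (n k : nat) (H : {set {set 'I_n}}) : bool :=
  (H \subset pairs n) && [forall v : 'I_n, #|[set e in H | v \in e]| == k].

Definition loss (R : realType) (n k : nat) (H Hs : {set {set 'I_n}}) : R :=
  (#|(H :\: Hs) :|: (Hs :\: H)|)%:R / ((k * n)%:R / 2).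

Definition Hgood (R : realType) (n k : nat) (delta : R) (Hs G : {set {set 'I_n}})
  : {set {set {set 'I_n}}} :=
  [set H : {set {set 'I_n}} | [&& @is_kfactor n k H,
     @loss R n k H Hs < 2 * delta / k%:R & H \subset G]].

(* Probability of the event P under G0 ~ G(n,p): each of the C(n,2) potential
   edges is present independently with probability p. *)
Definition Pr_Gnp (R : realType) (n : nat) (p : R) (P : pred {set {set 'I_n}}) : R :=
  \sum_(F : {set {set 'I_n}} | (F \subset pairs n) && P F)
     p ^+ #|F| * (1 - p) ^+ (#|pairs n| - #|F|).

From HB Require Import structures.
From mathcomp Require Import all_boot all_order all_algebra.
From mathcomp Require Import boolp classical_sets reals exp.
From mathcomp Require Import ring lra.
Import Order.TTheory GRing.Theory Num.Theory.

(* First moment method.  Given Hs, a k-factor H is contained in G0 :|: Hs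
   exactly when its new edges H :\: Hs all lie in G0, which has probability
   p ^ m for m = #|H :\: Hs|.  There are at most (k n) ^ m such H: H is
   determined by the m removed edges Hs :\: H, at most 'C(k n / 2, m) choices,
   and by the m added edges, a graph whose degrees are those of the removed
   ones, of which there are at most (2m - 1)!! .  As p k n = k lam =: x, and
   the loss bound forces m < delta n / 2, the expected size of H_good is at
   most the geometric sum x / (x - 1) * x ^ (delta n / 2); Markov's inequality
   at the threshold x / (x - 1) * x ^ (delta n) concludes. *)

Set Implicit Arguments. Unset Strict Implicit. Unset Printing Implicit Defensive.

Lemma card_le_sum_cover (T U : finType) (A : {set T}) (D : {set U})
    (P : U -> T -> bool) :
  (forall x, x \in A -> exists2 u, u \in D & P u x) ->
  #|A| <= \sum_(u in D) #|[set x in A | P u x]|.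
Proof.
move=> coverA; rewrite -sum1_card.
under [X in _ <= X]eq_bigr do rewrite -sum1dep_card big_mkcondr /=.
rewrite exchange_big /=; apply: leq_sum => x xA.
have [u uD Pux] := coverA x xA.
by rewrite (bigD1 u) //= Pux.
Qed.

Lemma setD_sym_inj (T : finType) (A A' B : {set T}) :
  A :\: B = A' :\: B -> B :\: A = B :\: A' -> A = A'.
Proof.
move=> /setP eqAB /setP eqBA; apply/setP => x.
by move: (eqAB x) (eqBA x); rewrite !inE;
  case: (x \in A); case: (x \in A'); case: (x \in B).
Qed.

Lemma sum_subn_mem (T : finType) (d : T -> nat) (e : {set T}) :
  (forall u, u \in e -> 0 < d u) ->
  \sum_u (d u - (u \in e)) = \sum_u d u - #|e|.
Proof.
move=> de; have -> : #|e| = \sum_u (u \in e) by rewrite -sum1_card big_mkcond.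
rewrite -[X in _ = X - _](eq_bigr _ (fun u _ => subnK (_ : (u \in e) <= d u))).
  by rewrite big_split /= addnK.
by move=> u; case: (boolP (u \in e)) => // /de.
Qed.

(* [pairings s] is (s - 1)!!, the number of perfect matchings of s points. *)
Fixpoint pairings (s : nat) : nat := if s is s'.+2 then s'.+1 * pairings s' else 1.

Lemma pairings_rec s : (s - 1) * pairings (s - 2) <= pairings s.
Proof. by case: s => [|[|s]] //=; rewrite !subSS !subn0. Qed.

Lemma pairings_double_le m : pairings (2 * m) <= 2 ^ m * m`!.
Proof.
elim: m => [//|m IH]; rewrite mulnS /= add0n factS expnS.
have -> : 2 * 2 ^ m * (m.+1 * m`!) = (2 * m.+1) * (2 ^ m * m`!) by ring.
by apply: leq_mul => //; rewrite mulnS ltnS leqnSn.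
Qed.

Lemma ffact_le_expn a m : a ^_ m <= a ^ m.
Proof.
rewrite ffact_prod -[m in a ^ m]card_ord -prod_nat_const.
by apply: leq_prod => i _; apply: leq_subr.
Qed.

Lemma binomial_pairings_le a m : 'C(a, m) * pairings (2 * m) <= (2 * a) ^ m.
Proof.
rewrite -(@leq_pmul2r m`!) ?fact_gt0 //.
apply: (@leq_trans ('C(a, m) * (2 ^ m * m`!) * m`!)).
  by rewrite leq_mul2r leq_mul2l pairings_double_le !orbT.
by rewrite leq_mul2r mulnCA bin_ffact expnMn leq_mul2l ffact_le_expn !orbT.
Qed.

Section Graphs.

Variable n : nat.
Local Notation graph := {set {set 'I_n}}.

Definition deg (A : graph) (v : 'I_n) : nat := #|[set e in A | v \in e]|.

Lemma degE (A : graph) v : deg A v = \sum_(e in A) (v \in e).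
Proof.
rewrite /deg -sum1_card [RHS]big_mkcond [LHS]big_mkcond /=.
by apply: eq_bigr => e _; rewrite inE; case: (e \in A); case: (v \in e).
Qed.

Lemma deg_setID (A B : graph) v : deg A v = deg (A :&: B) v + deg (A :\: B) v.
Proof. by rewrite !degE -big_setID. Qed.

Lemma deg_setD1 (A : graph) e v : e \in A -> deg (A :\ e) v = deg A v - (v \in e).
Proof. by move=> eA; rewrite [deg A v]degE (big_setD1 _ eA) -degE addKn. Qed.

Lemma sum_deg (A : graph) : A \subset pairs n -> \sum_v deg A v = 2 * #|A|.
Proof.
move=> sA; under eq_bigr do rewrite degE.
rewrite exchange_big /= mulnC -sum_nat_const; apply: eq_bigr => e eA.
have := fintype.subsetP sA e eA; rewrite inE => /eqP <-.
by rewrite -sum1_card [RHS]big_mkcond.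
Qed.

Lemma pairs_mem_set2 (e : {set 'I_n}) v : e \in pairs n -> v \in e ->
  exists2 w, w != v & e = [set v; w].
Proof.
rewrite inE => /cards2P [x [y [xy ->]]]; rewrite !inE => /orP[] /eqP ->.
- by exists y; rewrite 1?eq_sym.
- by exists x; rewrite // finset.setUC.
Qed.

Definition graphs_with_deg (d : 'I_n -> nat) : {set graph} :=
  [set B : graph | (B \subset pairs n) && [forall v, deg B v == d v]].

Lemma graphs_with_deg0 : graphs_with_deg (fun=> 0) \subset [set finset.set0].
Proof.
apply/fintype.subsetP => B; rewrite !inE => /andP[sB /forallP degB0].
apply/eqP/setP => e; rewrite inE; apply/negbTE/negP => eB.
have := fintype.subsetP sB e eB; rewrite inE => /eqP e2.
have [v ve] : exists v, v \in e by apply/set0Pn; rewrite -card_gt0 e2.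
have := degB0 v; rewrite /deg cards_eq0 => /eqP/setP/(_ e).
by rewrite !inE eB ve.
Qed.

Lemma card_graphs_with_deg_edge (d : 'I_n -> nat) e : e \in pairs n ->
  #|[set B in graphs_with_deg d | e \in B]|
    <= #|graphs_with_deg (fun v => d v - (v \in e))|.
Proof.
move=> e2; have inj : {in [set B in graphs_with_deg d | e \in B] &,
                        injective (fun B : graph => B :\ e)}.
  move=> B1 B2; rewrite !inE => /andP[_ eB1] /andP[_ eB2] eqB.
  by rewrite -(finset.setD1K eB1) -(finset.setD1K eB2) eqB.
rewrite -(card_in_imset inj); apply: subset_leq_card.
apply/fintype.subsetP => _ /imsetP [B + ->]; rewrite !inE.
case/andP=> /andP[sB /forallP degB] eB; apply/andP; split.
  exact: fintype.subset_trans (subD1set B e) sB.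
by apply/forallP => v; rewrite deg_setD1 // (eqP (degB v)).
Qed.

Lemma graphs_with_deg_cover (d : 'I_n -> nat) v : 0 < d v ->
  forall B, B \in graphs_with_deg d ->
  exists2 w, w \in [set w | (w != v) && (0 < d w)] & [set v; w] \in B.
Proof.
move=> dv B; rewrite inE => /andP[sB /forallP degB].
have : 0 < deg B v by rewrite (eqP (degB v)).
rewrite /deg card_gt0 => /set0Pn [e]; rewrite inE => /andP[eB ve].
have [w wv ew] := pairs_mem_set2 (fintype.subsetP sB e eB) ve.
exists w; rewrite -?ew // inE wv -(eqP (degB w)) /deg card_gt0.
by apply/set0Pn; exists e; rewrite inE eB ew !inE eqxx orbT.
Qed.

Lemma card_graphs_with_deg (d : 'I_n -> nat) :
  #|graphs_with_deg d| <= pairings (\sum_v d v).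
Proof.
have [s sd] : exists s, \sum_v d v = s by exists (\sum_v d v).
rewrite sd; elim/ltn_ind: s d sd => s IH d sd.
case: (pickP (fun v => 0 < d v)) => [v dv | d0]; last first.
  have d_eq0 : d = fun=> 0 by apply: funext => v; apply/eqP; rewrite -leqn0 leqNgt d0.
  rewrite -sd d_eq0 big1 //.
  by rewrite /= -(cards1 (finset.set0 : graph)) subset_leq_card ?graphs_with_deg0.
have s_pos : 0 < s by rewrite -sd (bigD1 v) // ltn_addr.
pose D := [set w | (w != v) && (0 < d w)].
apply: leq_trans (pairings_rec s).
apply: leq_trans (card_le_sum_cover (graphs_with_deg_cover dv)) _.
apply: (@leq_trans (\sum_(w in D) pairings (s - 2))).
  apply: leq_sum => w; rewrite inE => /andP[wv dw].
  have vw2 : [set v; w] \in pairs n by rewrite inE cards2 [v == w]eq_sym wv.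
  apply: leq_trans (card_graphs_with_deg_edge d vw2) _.
  have sum2 : \sum_u (d u - (u \in [set v; w])) = s - 2.
    rewrite sum_subn_mem ?sd ?cards2 ?[v == w]eq_sym ?wv // => u.
    by rewrite !inE => /orP[] /eqP ->.
  by apply: (IH _ _ _ sum2); rewrite ltn_subrL s_pos.
rewrite sum_nat_const leq_mul2r -sum1_card; apply/orP; right.
apply: (@leq_trans (\sum_(w | w != v) d w)).
  rewrite [X in X <= _]big_mkcond [X in _ <= X]big_mkcond /=.
  by apply: leq_sum => w _; rewrite inE; case: (w != v); case: (d w).
have sum_v : \sum_(w | w != v) d w + d v = s by rewrite -sd [in RHS](bigD1 v) // addnC.
by rewrite -sum_v -addnBA // leq_addr.
Qed.

End Graphs.

Section KFactors.

Variables n k : nat.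
Local Notation graph := {set {set 'I_n}}.
Local Notation kfactor := (@is_kfactor n k).

Lemma kfactor_sub (H : graph) : kfactor H -> H \subset pairs n.
Proof. by case/andP. Qed.

Lemma kfactor_deg (H : graph) v : kfactor H -> deg H v = k.
Proof. by case/andP => _ /forallP /(_ v) /eqP. Qed.

Lemma kfactor_card (H : graph) : kfactor H -> 2 * #|H| = k * n.
Proof.
move=> kH; rewrite -sum_deg ?kfactor_sub //.
under eq_bigr do rewrite (kfactor_deg _ kH).
by rewrite sum_nat_const card_ord mulnC.
Qed.

Lemma deg_kfactor_setD (H Hs : graph) v : kfactor H -> kfactor Hs ->
  deg (Hs :\: H) v = deg (H :\: Hs) v.
Proof.
move=> kH kHs; apply/eqP; rewrite -(eqn_add2l (deg (H :&: Hs) v)).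
by rewrite -deg_setID {1}finset.setIC -deg_setID !(kfactor_deg v kH, kfactor_deg v kHs).
Qed.

Lemma card_kfactor_setD (H Hs : graph) : kfactor H -> kfactor Hs ->
  #|Hs :\: H| = #|H :\: Hs|.
Proof.
move=> kH kHs; apply/eqP; rewrite -(eqn_pmul2l (isT : 0 < 2)).
rewrite -!sum_deg; last 2 first.
- exact: fintype.subset_trans (subsetDl H Hs) (kfactor_sub kH).
- exact: fintype.subset_trans (subsetDl Hs H) (kfactor_sub kHs).
by apply/eqP/eq_bigr => v _; apply: deg_kfactor_setD.
Qed.

Lemma card_kfactors_removing (Hs Rm : graph) : kfactor Hs -> Rm \subset Hs ->
  #|[set H : graph | kfactor H & Hs :\: H == Rm]| <= pairings (2 * #|Rm|).
Proof.
move=> kHs sRm; have inj : {in [set H : graph | kfactor H & Hs :\: H == Rm] &,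
                             injective (fun H : graph => H :\: Hs)}.
  move=> H1 H2; rewrite !inE => /andP[_ /eqP rm1] /andP[_ /eqP rm2] added.
  by apply: setD_sym_inj added _; rewrite rm1 rm2.
rewrite -(card_in_imset inj) -sum_deg ?(fintype.subset_trans sRm (kfactor_sub kHs)) //.
apply: leq_trans (card_graphs_with_deg (deg Rm)); apply: subset_leq_card.
apply/fintype.subsetP => _ /imsetP [H + ->]; rewrite !inE => /andP[kH /eqP <-].
rewrite (fintype.subset_trans (subsetDl H Hs) (kfactor_sub kH)) /=.
by apply/forallP => v; rewrite (deg_kfactor_setD v kH kHs).
Qed.

Lemma card_kfactors_near (Hs : graph) m : kfactor Hs ->
  #|[set H : graph | kfactor H & #|H :\: Hs| == m]| <= (k * n) ^ m.
Proof.
move=> kHs; pose D := [set Rm : graph | Rm \subset Hs & #|Rm| == m].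
have cover H : H \in [set H : graph | kfactor H & #|H :\: Hs| == m] ->
    exists2 Rm, Rm \in D & Hs :\: H == Rm.
  rewrite !inE => /andP[kH /eqP cardH]; exists (Hs :\: H) => //.
  by rewrite inE subsetDl (card_kfactor_setD kH kHs) cardH /=.
apply: leq_trans (card_le_sum_cover cover) _.
apply: (@leq_trans (\sum_(Rm in D) pairings (2 * m))).
  apply: leq_sum => Rm; rewrite inE => /andP[sRm /eqP <-].
  apply: leq_trans (card_kfactors_removing kHs sRm); apply: subset_leq_card.
  by apply/fintype.subsetP => H; rewrite !inE => /andP[/andP[-> _] ->].
by rewrite sum_nat_const cards_draws -(kfactor_card kHs) binomial_pairings_le.
Qed.

End KFactors.

Local Open Scope ring_scope.

Lemma sum_subsets (R : comPzSemiRingType) (T : finType) (S : {set T}) (p q : R) :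
  \sum_(F : {set T} | F \subset S) p ^+ #|F| * q ^+ (#|S| - #|F|) = (p + q) ^+ #|S|.
Proof.
rewrite addrC exprDn.
rewrite (partition_big (fun F : {set T} => (inord #|F| : 'I_#|S|.+1)) xpredT) //=.
apply: eq_bigr => i _.
rewrite (eq_bigr (fun _ => p ^+ i * q ^+ (#|S| - i))); last first.
  by move=> F /andP[sF /eqP <-]; rewrite inordK // ltnS subset_leq_card.
rewrite (eq_bigl (fun F => F \in [set F : {set T} | F \subset S & #|F| == i])).
  by rewrite sumr_const cards_draws mulrC.
move=> F; rewrite inE; case sF: (F \subset S) => //=.
by rewrite -val_eqE /= inordK // ltnS subset_leq_card.
Qed.

Lemma sum_supsets (R : comPzSemiRingType) (T : finType) (S A : {set T}) (p q : R) :
  A \subset S ->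
  \sum_(F : {set T} | (F \subset S) && (A \subset F)) p ^+ #|F| * q ^+ (#|S| - #|F|)
  = p ^+ #|A| * (p + q) ^+ #|S :\: A|.
Proof.
move=> sAS; rewrite -sum_subsets big_distrr /=.
pose D := [set F' : {set T} | F' \subset S :\: A].
have disjAD F : F \in D -> [disjoint A & F].
  rewrite inE => sF; rewrite fintype.disjoint_sym finset.disjoints_subset.
  by rewrite (fintype.subset_trans sF) // finset.setDE finset.subsetIr.
rewrite (eq_bigl (mem ((fun F' => A :|: F') @: D))); last first.
  move=> F; apply/andP/imsetP => [[sFS sAF] | [F' DF' ->]].
    exists (F :\: A); first by rewrite inE finset.setSD.
    by rewrite -{1}(finset.setID F A) (finset.setIidPr sAF).
  rewrite inE in DF'; rewrite finset.subUset sAS finset.subsetUl.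
  by rewrite (fintype.subset_trans DF') ?subsetDl.
rewrite big_imset /=; last first.
  move=> F1 F2 DF1 DF2 /(congr1 (fun F => F :\: A)).
  have setDA F : F \in D -> F :\: A = F.
    by move/disjAD; rewrite fintype.disjoint_sym => /finset.setDidPl.
  by rewrite !finset.setDUl finset.setDv !finset.set0U !setDA.
rewrite [RHS](eq_bigl (fun F => F \in D)) => [|F]; last by rewrite inE.
apply: eq_bigr => F DF.
rewrite finset.cardsU (finset.disjoint_setI0 (disjAD F DF)) cards0 subn0 exprD -mulrA.
by rewrite finset.cardsD (finset.setIidPr sAS) subnDA.
Qed.

Section Gnp.

Variables (R : realType) (n : nat) (p : R).
Local Notation graph := {set {set 'I_n}}.

Definition gnp_weight (F : graph) : R :=
  p ^+ #|F| * (1 - p) ^+ (#|pairs n| - #|F|).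

Definition E_Gnp (X : graph -> R) : R :=
  \sum_(F : graph | F \subset pairs n) gnp_weight F * X F.

Lemma Pr_GnpE (P : pred graph) :
  Pr_Gnp p P = \sum_(F : graph | (F \subset pairs n) && P F) gnp_weight F.
Proof. by []. Qed.

Lemma Pr_Gnp_supset (A : graph) : A \subset pairs n ->
  Pr_Gnp p (fun F => A \subset F) = p ^+ #|A|.
Proof. by move=> sA; rewrite /Pr_Gnp sum_supsets // addrC subrK expr1n mulr1. Qed.

Lemma E_Gnp_count (I : finType) (C : {set I}) (P : I -> pred graph) :
  E_Gnp (fun F => #|[set i in C | P i F]|%:R) = \sum_(i in C) Pr_Gnp p (P i).
Proof.
rewrite /E_Gnp.
under eq_bigr => F _ do rewrite -sum1dep_card natr_sum big_mkcondr /= mulr_sumr.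
rewrite exchange_big /=; apply: eq_bigr => i _.
rewrite Pr_GnpE big_mkcondr /=; apply: eq_bigr => F _.
by case: (P i F); rewrite ?mulr1 ?mulr0.
Qed.

Hypothesis p01 : 0 <= p <= 1.

Lemma gnp_weight_ge0 F : 0 <= gnp_weight F.
Proof. by case/andP: p01 => p0 p1; rewrite mulr_ge0 ?exprn_ge0 ?subr_ge0. Qed.

Lemma Pr_GnpC (P : pred graph) : Pr_Gnp p P = 1 - Pr_Gnp p (predC P).
Proof.
apply/eqP; rewrite eq_sym subr_eq -[1](expr1n _ #|pairs n|) -[X in X ^+ _](subrK p).
by rewrite addrC -sum_subsets (bigID P) /=.
Qed.

Lemma Pr_Gnp_markov (X : graph -> R) t : (forall F, 0 <= X F) -> 0 < t ->
  1 - E_Gnp X / t <= Pr_Gnp p (fun F => X F <= t).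
Proof.
move=> X_ge0 t_gt0; rewrite Pr_GnpC lerD2l lerN2 Pr_GnpE /E_Gnp mulr_suml.
apply: (@le_trans _ _ (\sum_(F : graph | (F \subset pairs n) && ~~ (X F <= t))
                          gnp_weight F * X F / t)).
  apply: ler_sum => F /andP[_] /=; rewrite -ltNge => tX.
  by rewrite -mulrA ler_peMr ?gnp_weight_ge0 // ler_pdivlMr // mul1r ltW.
rewrite [X in _ <= X](bigID (fun F => X F <= t)) /= lerDr.
apply: sumr_ge0 => F _; apply: mulr_ge0; last by rewrite invr_ge0 ltW.
exact: mulr_ge0 (gnp_weight_ge0 F) (X_ge0 F).
Qed.

End Gnp.

Lemma sum_geometric_lt_le (R : realType) (x c : R) (K : nat) : 1 < x -> 0 <= c ->
  \sum_(j < K) (if j%:R < c then x ^+ j else 0) <= x / (x - 1) * x `^ c.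
Proof.
move=> x_gt1 c_ge0; have x_ge0 : 0 <= x by rewrite ltW // (lt_trans _ x_gt1).
set J := (Num.truncn c).+1.
have [truncn_le c_lt] := andP (archimedean.Num.Theory.truncn_itv c_ge0).
pose g j := if (j < J)%N then x ^+ j else 0.
have g_ge0 j : 0 <= g j by rewrite /g; case: ifP => _; rewrite ?exprn_ge0.
apply: (@le_trans _ _ (\sum_(j < K) g j)).
  apply: ler_sum => j _; case: ifP => [jc|_]; last exact: g_ge0.
  by rewrite /g ifT // -(ltr_nat R) (lt_trans jc c_lt).
rewrite -(big_mkord xpredT g).
apply: (@le_trans _ _ (\sum_(0 <= j < K + J) g j)).
  rewrite [X in _ <= X](@big_cat_nat _ _ _ K) ?leq_addr //= lerDl.
  by apply: sumr_ge0 => j _.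
rewrite (@big_cat_nat _ _ _ J) ?leq_addl //= [X in _ + X]big_nat_cond.
rewrite [X in _ + X]big1 ?addr0 => [|j /andP[/andP[jJ _] _]]; last first.
  by rewrite /g ltnNge jJ.
rewrite big_nat_cond (eq_bigr (fun j => x ^+ j)); last first.
  by move=> j /andP[/andP[_ jJ] _]; rewrite /g jJ.
rewrite -big_nat_cond big_mkord mulrAC ler_pdivlMr ?subr_gt0 // mulrC -subrX1.
have : x ^+ J <= x * x `^ c.
  rewrite /J exprS ler_wpM2l // -powR_mulrn //.
  by apply: ler_powR => //; apply: ltW.
lra.
Qed.

Section Planted.

Variables (R : realType) (n k : nat).
Local Notation graph := {set {set 'I_n}}.
Local Notation kfactor := (@is_kfactor n k).

Lemma card_setD_lt_of_loss (delta : R) (H Hs : graph) :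
  (0 < n)%N -> (0 < k)%N -> kfactor H -> kfactor Hs ->
  @loss R n k H Hs < 2 * delta / k%:R -> #|H :\: Hs|%:R < delta * n%:R / 2.
Proof.
move=> n_gt0 k_gt0 kH kHs.
have disjD : #|(H :\: Hs) :&: (Hs :\: H)| = 0%N.
  apply/eqP; rewrite cards_eq0; apply/eqP/setP => e; rewrite !inE.
  by case: (e \in H); case: (e \in Hs).
rewrite /loss finset.cardsU disjD subn0 (card_kfactor_setD kH kHs) addnn -mul2n !natrM.
have kn_gt0 : 0 < (k%:R * n%:R : R) / 2 by rewrite divr_gt0 // mulr_gt0 ?ltr0n.
rewrite ltr_pdivrMr //.
have -> : 2 * delta / k%:R * (k%:R * n%:R / 2) = delta * n%:R.
  by field; rewrite pnatr_eq0 -lt0n.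
lra.
Qed.

Lemma sum_kfactors_near_le (Hs : graph) (C : {set graph}) (p c : R) :
  0 <= p -> kfactor Hs ->
  (forall H, H \in C -> kfactor H /\ #|H :\: Hs|%:R < c) ->
  \sum_(H in C) p ^+ #|H :\: Hs|
    <= \sum_(j < #|pairs n|.+1) (if j%:R < c then (p * (k * n)%:R) ^+ j else 0).
Proof.
move=> p_ge0 kHs nearC.
have card_lt H : H \in C -> (#|H :\: Hs| < #|pairs n|.+1)%N.
  move=> /nearC[kH _]; rewrite ltnS subset_leq_card //.
  exact: fintype.subset_trans (subsetDl H Hs) (kfactor_sub kH).
rewrite (partition_big (fun H => inord #|H :\: Hs| : 'I_#|pairs n|.+1) xpredT) //=.
apply: ler_sum => j _.
rewrite (eq_bigr (fun _ => p ^+ j)) => [|H /andP[HC /eqP <-]]; last first.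
  by rewrite inordK ?card_lt.
rewrite (eq_bigl (fun H => H \in [set H in C | #|H :\: Hs| == j])) => [|H]; last first.
  by rewrite inE; case HC: (H \in C); rewrite //= -val_eqE /= inordK ?card_lt.
rewrite sumr_const; case: ifP => jc.
  rewrite exprMn -natrX -[_ *+ _]mulr_natr ler_wpM2l ?exprn_ge0 // ler_nat.
  apply: leq_trans (card_kfactors_near j kHs); apply: subset_leq_card.
  by apply/fintype.subsetP => H; rewrite !inE => /andP[/nearC[-> _] ->].
suff -> : [set H in C | #|H :\: Hs| == j] = finset.set0 by rewrite cards0 mulr0n.
apply/setP => H; rewrite !inE; apply/negbTE/negP => /andP[/nearC[_ Hc] /eqP Hj].
by move: jc; rewrite -Hj Hc.
Qed.

Lemma E_Gnp_card_Hgood (p delta : R) (Hs : graph) :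
  E_Gnp p (fun G0 => #|@Hgood R n k delta Hs (G0 :|: Hs)|%:R)
  = \sum_(H in [set H : graph | kfactor H & @loss R n k H Hs < 2 * delta / k%:R])
      p ^+ #|H :\: Hs|.
Proof.
set C := [set H : graph | _].
have -> : (fun G0 => #|@Hgood R n k delta Hs (G0 :|: Hs)|%:R)
          = fun G0 => (#|[set H in C | H \subset G0 :|: Hs]|%:R : R).
  by apply: funext => G0; congr (_%:R); apply: eq_card => H; rewrite !inE andbA.
rewrite E_Gnp_count; apply: eq_bigr => H; rewrite inE => /andP[kH _].
rewrite -Pr_Gnp_supset; last first.
  exact: fintype.subset_trans (subsetDl H Hs) (kfactor_sub kH).
by congr Pr_Gnp; apply: funext => G0; rewrite subDset finset.setUC.
Qed.

Lemma E_Gnp_card_Hgood_le (lam delta : R) (Hs : graph) :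
  (0 < n)%N -> (0 < k)%N -> 0 <= lam -> 1 < k%:R * lam -> 0 <= delta -> kfactor Hs ->
  E_Gnp (lam / n%:R) (fun G0 => #|@Hgood R n k delta Hs (G0 :|: Hs)|%:R)
  <= k%:R * lam / (k%:R * lam - 1) * (k%:R * lam) `^ (delta * n%:R / 2).
Proof.
move=> n_gt0 k_gt0 lam_ge0 x_gt1 delta_ge0 kHs.
rewrite E_Gnp_card_Hgood.
apply: le_trans (sum_geometric_lt_le _ x_gt1 _); last by rewrite !mulr_ge0 ?invr_ge0.
have -> : k%:R * lam = lam / n%:R * (k * n)%:R.
  by rewrite natrM; field; rewrite pnatr_eq0 -lt0n.
apply: sum_kfactors_near_le; rewrite ?divr_ge0 // => H; rewrite inE => /andP[kH lossH].
by split=> //; apply: card_setD_lt_of_loss lossH.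
Qed.

End Planted.

Unset Implicit Arguments.

Theorem mainTheorem8 (R : realType) (k n : nat) (lam eps delta : R)
    (Hs : {set {set 'I_n}}) :
  (1 <= k)%N -> ~~ odd (k * n) ->
  0 <= lam / n%:R <= 1 ->
  0 < eps -> k%:R * lam >= 1 + eps ->
  0 < delta ->
  @is_kfactor n k Hs ->
  @Pr_Gnp R n (lam / n%:R)
    (fun G0 => #|@Hgood R n k delta Hs (G0 :|: Hs)|%:R
               <= (k%:R * lam) / (k%:R * lam - 1)
                  * (k%:R * lam) `^ (delta * n%:R))
  >= 1 - (k%:R * lam) `^ (- (delta * n%:R / 2)).
Proof.
move=> k_gt0 _ p01 eps_gt0 x_ge delta_gt0 kHs.
have [n0 | n_gt0] := posnP n.
  have -> : delta * n%:R / 2 = 0 by rewrite n0 mulr0 mul0r.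
  rewrite oppr0 powRr0 subrr Pr_GnpE.
  by apply: sumr_ge0 => G0 _; apply: gnp_weight_ge0.
set x := k%:R * lam; set c := delta * n%:R / 2.
have x_gt1 : 1 < x by apply: lt_le_trans x_ge; rewrite ltrDl.
have x_gt0 : 0 < x := lt_trans ltr01 x_gt1.
have lam_ge0 : 0 <= lam by rewrite ltW // -(@pmulr_rgt0 _ k%:R) ?ltr0n.
have t_gt0 : 0 < x / (x - 1) * x `^ (delta * n%:R).
  by rewrite mulr_gt0 ?divr_gt0 ?powR_gt0 ?subr_gt0.
apply: le_trans (Pr_Gnp_markov p01 _ t_gt0) => [|G0]; last exact: ler0n.
rewrite lerD2l lerN2 ler_pdivrMr //.
apply: le_trans (E_Gnp_card_Hgood_le n_gt0 k_gt0 lam_ge0 x_gt1 (ltW delta_gt0) kHs) _.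
rewrite -/x -/c (splitr (delta * n%:R)) -/c.
rewrite powRD ?(gt_eqF x_gt0) ?implybT // powRN.
by rewrite [X in _ <= X]mulrCA mulKf // gt_eqF ?powR_gt0.
Qed.
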